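(* Let $n\ge1$ and let $A\in\mathbb{R}^{2^n\times 2^n}$ be a symmetric matrix with non-negative entries, represented by a dictionary data structure with $s_0\le 2^n$ data items in the following sense: there are positive reals $A_0,\dots,A_{s_0-1}$, sets $S_c(l)\subseteq[0,2^n-1]$ for $l\in[0,s_0-1]$, and for each $j\in[0,2^n-1]$ a map $l\mapsto c_j(l)\in[0,2^n-1]$ (defined for $l$ with $j\in S_c(l)$) which is injective in $l$, such that the pairs $(c_j(l),j)$ are pairwise distinct and $$A=\sum_{l=0}^{s_0-1}\sum_{j\in S_c(l)}A_l\ket{c_j(l)}\bra{j}.$$ Let $m=\lceil\log_2 s_0\rceil$. Consider registers idx ($n$ qubits, split as $n-m$ high qubits and $m$ low qubits), del1 and del0 (one qubit each) and a system register ($n$ qubits). Suppose $O_c$ is a unitary on idx$\otimes$del1$\otimes$system such that $$O_c\ket{0}^{\otimes(n-m)}\ket{l}_{\rm idx}\ket{0}_{\rm del1}\ket{j}=\begin{cases}\ket{c_j(l)}_{\rm idx}\ket{0}_{\rm del1}\ket{j}, & \text{if } j\in S_c(l)\text{ and } l\in[0,s_0-1],\\ \ket{0}^{\otimes(n-m)}\ket{l}_{\rm idx}\ket{1}_{\rm del1}\ket{j}, & \text{if } j\notin S_c(l)\text{ or } l\in[s_0,2^m-1],\end{cases}$$ and $\mathrm{PREP}$ is a unitary on the low $m$ qubits of idx with $\mathrm{PREP}\ket{0}^{\otimes m}=\frac{1}{\sqrt{\sum_{l=0}^{s_0-1}A_l}}\sum_{l=0}^{s_0-1}\sqrt{A_l}\ket{l}$.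 Let $W=O_c(\mathrm{PREP}\otimes I)$ (with $O_c$ acting trivially on del0), let $S$ be the unitary that swaps the qubits del1 and del0 and swaps the $n$-qubit registers idx and system, and let $U_A=W^\dagger S W$. Then $U_A$ is a Hermitian block encoding of $A$ with subnormalization $\sum_{l=0}^{s_0-1}A_l$, i.e. $U_A$ is unitary and Hermitian and $$\big(\bra{0}^{\otimes n}_{\rm idx}\bra{0}_{\rm del1}\bra{0}_{\rm del0}\otimes I_{2^n}\big)U_A\big(\ket{0}^{\otimes n}_{\rm idx}\ket{0}_{\rm del1}\ket{0}_{\rm del0}\otimes I_{2^n}\big)=\frac{A}{\sum_{l=0}^{s_0-1}A_l}.$$
   Context: $[a,b]=\{a,\dots,b\}$; $\ket{j}$ denotes the computational basis state of the binary representation of $j$; $I_N$ is the $N\times N$ identity. A Hermitian block encoding of a Hermitian matrix is a block encoding $U_A$ which is itself a Hermitian unitary. *)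

(* Complex scalars: an arbitrary numClosedFieldType C
   (e.g. algC or R[i]); positivity/nonnegativity in C means real and >0/>=0. *)
From HB Require Import structures.
From mathcomp Require Import all_boot all_order all_algebra.
Set Implicit Arguments. Unset Strict Implicit. Unset Printing Implicit Defensive.
Import Order.TTheory GRing.Theory Num.Theory.
Local Open Scope ring_scope.

Lemma pow2_gt0 (k : nat) : (0 < 2 ^ k)%N.
Proof. by rewrite expn_gt0. Qed.

Definition zero_ord (k : nat) : 'I_(2 ^ k) := Ordinal (pow2_gt0 k).
Definition lowidx (k i : nat) : 'I_(2 ^ k) :=
  Ordinal (ltn_pmod i (pow2_gt0 k)).

Definition q0 : 'I_2 := @ord0 1.
Definition q1 : 'I_2 := @ord_max 1.

(* basis labels of idx (x) del1 (x) del0 (x) system *)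
Definition Sp (n : nat) := ('I_(2 ^ n) * 'I_2 * 'I_2 * 'I_(2 ^ n))%type.
(* basis labels of idx (x) del1 (x) system *)
Definition Sp3 (n : nat) := ('I_(2 ^ n) * 'I_2 * 'I_(2 ^ n))%type.

Definition ket (C : nzRingType) (T : finType) (x : T) : 'cV[C]_#|{: T}| :=
  delta_mx (enum_rank x) 0.

Definition adj (C : numClosedFieldType) (p q : nat) (M : 'M[C]_(p, q))
  : 'M[C]_(q, p) := (map_mx Num.conj M)^T.

Definition unitary (C : numClosedFieldType) (p : nat) (U : 'M[C]_p) : Prop :=
  adj U *m U = 1%:M /\ U *m adj U = 1%:M.

Definition ext_del0 (C : nzRingType) (n : nat) (O : 'M[C]_#|{: Sp3 n}|)
  : 'M[C]_#|{: Sp n}| :=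
  \matrix_(r, s)
    let: (i, a, b, j) := (enum_val r : Sp n) in
    let: (i', a', b', j') := (enum_val s : Sp n) in
    (b == b')%:R * O (enum_rank ((i, a, j) : Sp3 n)) (enum_rank ((i', a', j') : Sp3 n)).

(* P acting on the low m qubits of idx, tensored with the identity elsewhere;
   idx value i = (high n-m qubits) * 2^m + (low m qubits) *)
Definition prep_ext (C : nzRingType) (n m : nat) (P : 'M[C]_(2 ^ m))
  : 'M[C]_#|{: Sp n}| :=
  \matrix_(r, s)
    let: (i, a, b, j) := (enum_val r : Sp n) in
    let: (i', a', b', j') := (enum_val s : Sp n) in
    [&& (i %/ 2 ^ m == i' %/ 2 ^ m)%N, a == a', b == b' & j == j']%:R
      * P (lowidx m i) (lowidx m i').

Definition swapf (n : nat) (x : Sp n) : Sp n :=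
  let: (i, a, b, j) := x in (j, b, a, i).

Definition swap_mx (C : nzRingType) (n : nat) : 'M[C]_#|{: Sp n}| :=
  \matrix_(r, s) (enum_val r == swapf (enum_val s))%:R.

Definition iso0 (C : nzRingType) (n : nat) : 'M[C]_(#|{: Sp n}|, 2 ^ n) :=
  \matrix_(r, j) (enum_val r == ((zero_ord n, q0, q0, j) : Sp n))%:R.

(* W maps |0, 0, 0, j> (registers idx, del1, del0, system) to the sum over l < s0 of
   sqrt (A_l / sum A) |y_l>, where y_l = |c_j(l), 0, 0, j> if j is in S_c(l) and y_l is
   the failure state |l, 1, 0, j> otherwise.  The swap S is a Hermitian involution, so
   W^* S W is a Hermitian unitary, and its (i, j) block entry is the overlap of W|0, i>
   with S W|0, j>.  Failure states have del1 = 1, which S moves into del0, where no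
   y_l has a 1; hence only successful branches l', l with c_i(l') = j and c_j(l) = i
   overlap.  Each of them is unique, with amplitudes sqrt (A_ji / sum A) and
   sqrt (A_ij / sum A), whose product is A_ij / sum A by symmetry.  W is unitary
   because an operator acting on some of the registers is M *t 1 conjugated by the
   permutation matrix that reorders the basis. *)

From mathcomp Require Import all_boot all_order all_algebra mxtens zify.
Import Order.TTheory GRing.Theory Num.Theory Num.Def.
Local Open Scope ring_scope.
Set Implicit Arguments. Unset Strict Implicit. Unset Printing Implicit Defensive.

Section Adjoint.
Variable C : numClosedFieldType.

Lemma adjM p q r (M : 'M[C]_(p, q)) (N : 'M[C]_(q, r)) : adj (M *m N) = adj N *m adj M.
Proof. by rewrite /adj map_mxM trmx_mul. Qed.

Lemma adjK p q (M : 'M[C]_(p, q)) : adj (adj M) = M.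
Proof. by apply/matrixP => i j; rewrite !mxE conjCK. Qed.

Lemma adj1 p : adj (1%:M : 'M[C]_p) = 1%:M.
Proof. by rewrite /adj map_mx1 trmx1. Qed.

Lemma adj_sumZ p q (I : finType) (a : I -> C) (M : I -> 'M[C]_(p, q)) :
  adj (\sum_i a i *: M i) = \sum_i (a i)^* *: adj (M i).
Proof.
apply/matrixP => r s; rewrite !mxE !summxE rmorph_sum.
by apply: eq_bigr => i _; rewrite !mxE rmorphM.
Qed.

Lemma adj_tensmx p q r s (M : 'M[C]_(p, q)) (N : 'M[C]_(r, s)) :
  adj (M *t N) = adj M *t adj N.
Proof. by rewrite /adj map_mxT trmx_tens. Qed.

Lemma adj_conj_entry p q (B : 'M[C]_(p, q)) (M : 'M[C]_p) i j :
  (adj B *m M *m B) i j = (adj (col i B) *m M *m col j B) 0 0.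
Proof.
have -> : adj (col i B) = row i (adj B) by apply/matrixP => ? ?; rewrite !mxE.
by rewrite -row_mul !mxE; apply: eq_bigr => k _; rewrite !mxE.
Qed.

Lemma adj_conj_hermitian p q (W : 'M[C]_(p, q)) (S : 'M[C]_p) :
  adj S = S -> adj (adj W *m S *m W) = adj W *m S *m W.
Proof. by move=> S'S; rewrite !adjM adjK S'S mulmxA. Qed.

Lemma unitary1 p : unitary (1%:M : 'M[C]_p).
Proof. by split; rewrite adj1 mulmx1. Qed.

Lemma unitary_adj p (U : 'M[C]_p) : unitary U -> unitary (adj U).
Proof. by case=> U'U UU'; split; rewrite adjK. Qed.

Lemma unitary_mul p (U V : 'M[C]_p) : unitary U -> unitary V -> unitary (U *m V).
Proof.
move=> [U'U UU'] [V'V VV']; split; rewrite adjM.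
  by rewrite mulmxA -(mulmxA _ (adj U)) U'U mulmx1.
by rewrite mulmxA -(mulmxA _ V) VV' mulmx1.
Qed.

Lemma hermitian_involution_unitary p (S : 'M[C]_p) :
  adj S = S -> S *m S = 1%:M -> unitary S.
Proof. by move=> S'S SS; split; rewrite S'S. Qed.

Lemma unitary_conj_iso p q (Q : 'M[C]_(p, q)) (U : 'M[C]_q) :
  adj Q *m Q = 1%:M -> Q *m adj Q = 1%:M -> unitary U -> unitary (Q *m U *m adj Q).
Proof.
move=> Q'Q QQ' [U'U UU']; split; rewrite !adjM adjK !mulmxA.
  by rewrite -(mulmxA _ _ Q) Q'Q mulmx1 -(mulmxA _ (adj U)) U'U mulmx1 QQ'.
by rewrite -(mulmxA _ _ Q) Q'Q mulmx1 -(mulmxA _ U) UU' mulmx1 QQ'.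
Qed.

End Adjoint.

Section Tensor.
Variable R : comPzRingType.

Lemma tensmx11 p q : (1%:M : 'M[R]_p) *t (1%:M : 'M[R]_q) = 1%:M.
Proof.
apply/matrixP => u v.
case: (mxtens_indexP u) => i k; case: (mxtens_indexP v) => j l.
by rewrite tensmxE !mxE -natrM mulnb (can_eq (@mxtens_indexK _ _)) xpair_eqE.
Qed.

Lemma tens_delta p q r s (i : 'I_p) (j : 'I_q) (k : 'I_r) (l : 'I_s) :
  delta_mx i j *t delta_mx k l =
    delta_mx (mxtens_index (i, k)) (mxtens_index (j, l)) :> 'M[R]_(p * r, q * s).
Proof.
apply/matrixP => u v.
case: (mxtens_indexP u) => i' k'; case: (mxtens_indexP v) => j' l'.
rewrite tensmxE !mxE -natrM mulnb !(can_eq (@mxtens_indexK _ _)) !xpair_eqE.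
by rewrite andbACA.
Qed.

Lemma tens_delta_col p q (i : 'I_p) (k : 'I_q) :
  delta_mx i (0 : 'I_1) *t delta_mx k (0 : 'I_1) =
    delta_mx (mxtens_index (i, k)) 0 :> 'cV[R]_(p * q).
Proof. by rewrite tens_delta; congr delta_mx; apply: val_inj. Qed.

Lemma tensmx_mul_delta p q (M : 'M[R]_p) (N : 'M[R]_q) (i : 'I_p) (k : 'I_q) :
  (M *t N) *m delta_mx (mxtens_index (i, k)) 0 =
    (M *m delta_mx i (0 : 'I_1)) *t (N *m delta_mx k (0 : 'I_1)).
Proof. by rewrite -tens_delta_col; exact: (@tensmx_mul R p p q q 1 1). Qed.

Lemma tensmx_sumZl p q r s (I : finType) (a : I -> R) (M : I -> 'M[R]_(p, q))
    (N : 'M[R]_(r, s)) :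
  (\sum_t a t *: M t) *t N = \sum_t a t *: (M t *t N).
Proof.
apply/matrixP => u v.
case: (mxtens_indexP u) => i k; case: (mxtens_indexP v) => j l.
rewrite tensmxE !summxE mulr_suml; apply: eq_bigr => t _.
by rewrite [RHS]mxE tensmxE mxE mulrA.
Qed.

End Tensor.

Lemma unitary_tensmx (C : numClosedFieldType) p q (U : 'M[C]_p) (V : 'M[C]_q) :
  unitary U -> unitary V -> unitary (U *t V).
Proof.
move=> [U'U UU'] [V'V VV'].
by split; rewrite adj_tensmx tensmx_mul ?U'U ?V'V ?UU' ?VV' tensmx11.
Qed.

Section Kets.
Variables (C : nzRingType) (T : finType).

Lemma mulmx_ket p (M : 'M[C]_(p, #|{: T}|)) (x : T) : M *m ket C x = col (enum_rank x) M.
Proof. by rewrite colE. Qed.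

Lemma mx_ket_eq p (M N : 'M[C]_(p, #|{: T}|)) :
  (forall x : T, M *m ket C x = N *m ket C x) -> M = N.
Proof.
move=> MN; apply/matrixP => r s.
have := congr1 (fun v : 'cV[C]_p => v r 0) (MN (enum_val s)).
by rewrite !mulmx_ket !mxE enum_valK.
Qed.

End Kets.

Section Relabel.
Variables (C : nzRingType) (T : finType) (p : nat) (e : T -> 'I_p).

Definition relabel_mx : 'M[C]_(#|{: T}|, p) := \matrix_(r, k) (e (enum_val r) == k)%:R.

Lemma relabel_mx_delta (e_inj : injective e) x : relabel_mx *m delta_mx (e x) 0 = ket C x.
Proof.
apply/matrixP => r s; rewrite -colE !mxE (inj_eq e_inj) [s]ord1 eqxx andbT.
by rewrite -(inj_eq enum_val_inj) enum_rankK.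
Qed.

Lemma tr_relabel_mx_ket x : relabel_mx^T *m ket C x = delta_mx (e x) 0.
Proof.
by apply/matrixP => k s; rewrite mulmx_ket !mxE enum_rankK [s]ord1 eqxx andbT eq_sym.
Qed.

Lemma relabel_mx_col (v : 'cV[C]_p) x : (relabel_mx *m v) (enum_rank x) 0 = v (e x) 0.
Proof.
have row_relabel : row (enum_rank x) relabel_mx = delta_mx 0 (e x).
  by apply/matrixP => i k; rewrite !mxE enum_rankK [i]ord1 eqxx eq_sym.
have := congr1 (fun w : 'rV[C]_1 => w 0 0) (row_mul (enum_rank x) relabel_mx v).
by rewrite row_relabel -rowE !mxE.
Qed.

Lemma relabel_conjE (M : 'M[C]_p) x y :
  (relabel_mx *m M *m relabel_mx^T) (enum_rank x) (enum_rank y) = M (e x) (e y).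
Proof.
have := congr1 (fun v : 'cV[C]_#|{: T}| => v (enum_rank x) 0)
  (mulmx_ket (relabel_mx *m M *m relabel_mx^T) y).
by rewrite -mulmxA tr_relabel_mx_ket -mulmxA relabel_mx_col -colE !mxE => <-.
Qed.

Lemma relabel_conj_ket (M : 'M[C]_p) x :
  relabel_mx *m M *m relabel_mx^T *m ket C x = relabel_mx *m (M *m delta_mx (e x) 0).
Proof. by rewrite -mulmxA tr_relabel_mx_ket mulmxA. Qed.

Lemma relabel_mxK : injective e -> relabel_mx *m relabel_mx^T = 1%:M.
Proof.
move=> e_inj; apply: mx_ket_eq => x.
by rewrite -mulmxA tr_relabel_mx_ket relabel_mx_delta ?mul1mx.
Qed.

Lemma tr_relabel_mxK : bijective e -> relabel_mx^T *m relabel_mx = 1%:M.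
Proof.
move=> [e' eK e'K]; apply/matrixP => k l; rewrite -[l]e'K.
have := congr1 (fun v : 'cV[C]_p => v k 0) (colE (e (e' l)) (relabel_mx^T *m relabel_mx)).
rewrite -mulmxA relabel_mx_delta ?tr_relabel_mx_ket; last exact: can_inj eK.
by rewrite !mxE eqxx andbT => <-.
Qed.

End Relabel.

Lemma adj_relabel_mx (C : numClosedFieldType) (T : finType) p (e : T -> 'I_p) :
  adj (relabel_mx C e) = (relabel_mx C e)^T.
Proof. by apply/matrixP => k r; rewrite !mxE rmorph_nat. Qed.

Lemma unitary_relabel_conj (C : numClosedFieldType) (T : finType) p (e : T -> 'I_p)
    (U : 'M[C]_p) :
  bijective e -> unitary U -> unitary (relabel_mx C e *m U *m (relabel_mx C e)^T).
Proof.
move=> e_bij; rewrite -adj_relabel_mx; apply: unitary_conj_iso.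
  by rewrite adj_relabel_mx tr_relabel_mxK.
by rewrite adj_relabel_mx relabel_mxK //; apply: bij_inj.
Qed.

Lemma ket_dot (C : numClosedFieldType) (T : finType) (x y : T) :
  (adj (ket C x) *m ket C y) 0 0 = (x == y)%:R.
Proof. by rewrite mulmx_ket !mxE eqxx andbT rmorph_nat (inj_eq enum_rank_inj) eq_sym. Qed.

Lemma dot_ket_sum (C : numClosedFieldType) (T I J : finType) (a : I -> C) (b : J -> C)
    (u : I -> T) (v : J -> T) :
  (adj (\sum_i a i *: ket C (u i)) *m (\sum_j b j *: ket C (v j))) 0 0 =
    \sum_i \sum_j (a i)^* * b j * (u i == v j)%:R.
Proof.
rewrite adj_sumZ mulmx_suml summxE; apply: eq_bigr => i _.
rewrite -scalemxAl mulmx_sumr mxE summxE mulr_sumr; apply: eq_bigr => j _.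
by rewrite -scalemxAr mxE ket_dot mulrA.
Qed.

Lemma sum_mul_cond (R : pzSemiRingType) (I J : finType) (P : pred I) (Q : pred J)
    (F : I -> R) (G : J -> R) :
  \sum_i \sum_j F i * G j * (P i && Q j)%:R = (\sum_(i | P i) F i) * (\sum_(j | Q j) G j).
Proof.
rewrite big_distrlr /= [RHS]big_mkcond; apply: eq_bigr => i _.
case: (P i); last by rewrite big1 // => j _; rewrite andFb mulr0.
by rewrite [RHS]big_mkcond; apply: eq_bigr => j _; case: (Q j); rewrite ?mulr1 ?mulr0.
Qed.

Lemma sqrtC_sum_unique (C : numClosedFieldType) (I : finType) (P : pred I) (f : I -> C) :
  (forall k l, P k -> P l -> k = l) ->
  \sum_(l | P l) sqrtC (f l) = sqrtC (\sum_(l | P l) f l).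
Proof.
move=> P_uniq; case: (pickP P) => [l0 Pl0 | P0]; last by rewrite !big_pred0 ?sqrtC0.
have P1 : P =1 pred1 l0 by move=> l; apply/idP/eqP => [Pl | ->]; [exact: P_uniq|].
by rewrite !(big_pred1 l0 P1).
Qed.

Lemma high_idx_proof n m (i : 'I_(2 ^ n)) : (i %/ 2 ^ m < 2 ^ (n - m))%N.
Proof.
rewrite ltn_divLR ?pow2_gt0 // -expnD (leq_trans (ltn_ord i)) // leq_exp2l //; lia.
Qed.

Definition high_idx n m (i : 'I_(2 ^ n)) : 'I_(2 ^ (n - m)) := Ordinal (high_idx_proof m i).

Definition Sp_rest n m := ('I_(2 ^ (n - m)) * 'I_2 * 'I_2 * 'I_(2 ^ n))%type.

(* Reorderings of the registers putting the one acted upon first, as the left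
   factor of [*t]. *)
Definition del0_split n (x : Sp n) : 'I_(#|{: Sp3 n}| * 2) :=
  let: (i, a, b, j) := x in mxtens_index (enum_rank ((i, a, j) : Sp3 n), b).

Definition prep_rest n m (x : Sp n) : Sp_rest n m :=
  let: (i, a, b, j) := x in (high_idx m i, a, b, j).

Definition prep_split n m (x : Sp n) : 'I_(2 ^ m * #|{: Sp_rest n m}|) :=
  mxtens_index (lowidx m x.1.1.1, enum_rank (prep_rest m x)).

Lemma del0_split_inj n : injective (@del0_split n).
Proof.
move=> [[[i a] b] j] [[[i' a'] b'] j'] /(can_inj (@mxtens_indexK _ _)) [].
by move=> /enum_rank_inj [-> -> ->] ->.
Qed.

Lemma del0_split_bij n : bijective (@del0_split n).
Proof.
apply: inj_card_bij (@del0_split_inj n) _.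
by rewrite card_ord !card_prod !card_ord; lia.
Qed.

Lemma prep_split_inj n m : injective (@prep_split n m).
Proof.
move=> [[[i a] b] j] [[[i' a'] b'] j'] /(can_inj (@mxtens_indexK _ _)) [].
move=> lo_eq /enum_rank_inj [hi_eq -> -> ->].
suff -> : i = i' by [].
by apply: val_inj; rewrite /= (divn_eq i (2 ^ m)) lo_eq hi_eq -divn_eq.
Qed.

Lemma prep_split_bij n m : (m <= n)%N -> bijective (@prep_split n m).
Proof.
move=> mn; apply: inj_card_bij (@prep_split_inj n m) _.
by rewrite card_ord !card_prod !card_ord !mulnA -expnD subnKC.
Qed.

Section SubsystemOperators.
Variables (C : comNzRingType) (n : nat).

Lemma ext_del0E (O : 'M[C]_#|{: Sp3 n}|) :
  ext_del0 O =
    relabel_mx C (@del0_split n) *m (O *t 1%:M) *m (relabel_mx C (@del0_split n))^T.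
Proof.
apply/matrixP => r s; rewrite -[r]enum_valK -[s]enum_valK relabel_conjE mxE !enum_rankK.
case: (enum_val r) => [[[i a] b] j]; case: (enum_val s) => [[[i' a'] b'] j'].
by rewrite tensmxE mxE mulrC.
Qed.

Lemma prep_extE m (P : 'M[C]_(2 ^ m)) :
  prep_ext n P =
    relabel_mx C (@prep_split n m) *m (P *t 1%:M) *m (relabel_mx C (@prep_split n m))^T.
Proof.
apply/matrixP => r s; rewrite -[r]enum_valK -[s]enum_valK relabel_conjE mxE !enum_rankK.
case: (enum_val r) => [[[i a] b] j]; case: (enum_val s) => [[[i' a'] b'] j'].
rewrite tensmxE mxE (inj_eq enum_rank_inj) !xpair_eqE mulrC.
by rewrite -[high_idx m i == _]val_eqE /= !andbA.
Qed.

Lemma ext_del0_ket (O : 'M[C]_#|{: Sp3 n}|) i a b j i' a' j' :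
  O *m ket C ((i, a, j) : Sp3 n) = ket C ((i', a', j') : Sp3 n) ->
  ext_del0 O *m ket C ((i, a, b, j) : Sp n) = ket C ((i', a', b, j') : Sp n).
Proof.
move=> Oij; rewrite ext_del0E relabel_conj_ket tensmx_mul_delta.
rewrite [O *m _]Oij mul1mx tens_delta_col.
by rewrite -(relabel_mx_delta C (@del0_split_inj n)).
Qed.

Lemma prep_ext_ket m (P : 'M[C]_(2 ^ m)) (x : Sp n) (I : finType) (w : I -> C)
    (y : I -> Sp n) :
  P *m delta_mx (lowidx m x.1.1.1) 0 =
    \sum_t w t *: delta_mx (lowidx m (y t).1.1.1) (0 : 'I_1) ->
  (forall t, prep_rest m (y t) = prep_rest m x) ->
  prep_ext n P *m ket C x = \sum_t w t *: ket C (y t).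
Proof.
move=> Px rest_y.
rewrite prep_extE relabel_conj_ket tensmx_mul_delta Px mul1mx tensmx_sumZl mulmx_sumr.
apply: eq_bigr => t _; rewrite -scalemxAr tens_delta_col -(rest_y t).
by rewrite (relabel_mx_delta C (@prep_split_inj n m)).
Qed.

End SubsystemOperators.

Lemma unitary_ext_del0 (C : numClosedFieldType) n (O : 'M[C]_#|{: Sp3 n}|) :
  unitary O -> unitary (ext_del0 O).
Proof.
move=> Ou; rewrite ext_del0E.
exact: unitary_relabel_conj (del0_split_bij n) (unitary_tensmx Ou (unitary1 _ _)).
Qed.

Lemma unitary_prep_ext (C : numClosedFieldType) n m (P : 'M[C]_(2 ^ m)) :
  (m <= n)%N -> unitary P -> unitary (prep_ext n P).
Proof.
move=> mn Pu; rewrite prep_extE.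
exact: unitary_relabel_conj (prep_split_bij mn) (unitary_tensmx Pu (unitary1 _ _)).
Qed.

Lemma swapfK n : involutive (@swapf n).
Proof. by case=> [[[i a] b] j]. Qed.

Lemma swap_mx_ket (C : nzRingType) n (x : Sp n) : swap_mx C n *m ket C x = ket C (swapf x).
Proof.
apply/matrixP => r s; rewrite mulmx_ket !mxE enum_rankK [s]ord1 eqxx andbT.
by rewrite (can2_eq (@enum_valK _) (@enum_rankK _)).
Qed.

Lemma swap_mx_sum_ket (C : comNzRingType) n (I : finType) (a : I -> C) (y : I -> Sp n) :
  swap_mx C n *m (\sum_t a t *: ket C (y t)) = \sum_t a t *: ket C (swapf (y t)).
Proof. by rewrite mulmx_sumr; apply: eq_bigr => t _; rewrite -scalemxAr swap_mx_ket. Qed.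

Lemma swap_mxK (C : nzRingType) n : swap_mx C n *m swap_mx C n = 1%:M.
Proof. by apply: mx_ket_eq => x; rewrite -mulmxA !swap_mx_ket swapfK mul1mx. Qed.

Lemma adj_swap_mx (C : numClosedFieldType) n : adj (swap_mx C n) = swap_mx C n.
Proof. by apply/matrixP => r s; rewrite !mxE rmorph_nat eq_sym (inv_eq (@swapfK n)). Qed.

Lemma unitary_swap_mx (C : numClosedFieldType) n : unitary (swap_mx C n).
Proof. exact: hermitian_involution_unitary (adj_swap_mx C n) (swap_mxK C n). Qed.

Lemma col_iso0 (C : nzRingType) n j :
  col j (iso0 C n) = ket C ((zero_ord n, q0, q0, j) : Sp n).
Proof.
apply/matrixP => r s; rewrite !mxE [s]ord1 eqxx andbT.
by rewrite (can2_eq (@enum_valK _) (@enum_rankK _)).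
Qed.

Section DictionaryBlockEncoding.
Variables (C : numClosedFieldType) (n s0 : nat) (A : 'M[C]_(2 ^ n)) (Acoef : nat -> C)
  (Sc : nat -> {set 'I_(2 ^ n)}) (c : 'I_(2 ^ n) -> nat -> 'I_(2 ^ n))
  (Oc : 'M[C]_#|{: Sp3 n}|) (PREP : 'M[C]_(2 ^ up_log 2 s0)).
Hypothesis s0_le : (s0 <= 2 ^ n)%N.

Local Notation m := (up_log 2 s0).
Local Notation subnorm := (\sum_(l < s0) Acoef l).

Definition in_dict (i j : 'I_(2 ^ n)) (l : nat) := (j \in Sc l) && (c j l == i).

Definition dict_state (l : 'I_s0) (j : 'I_(2 ^ n)) : Sp n :=
  if j \in Sc l then (c j l, q0, q0, j) else (widen_ord s0_le l, q1, q0, j).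

Lemma swap_dict_state l l' i j :
  (dict_state l' i == swapf (dict_state l j)) = in_dict j i l' && in_dict i j l.
Proof.
rewrite /dict_state /in_dict; case: (i \in Sc l'); case: (j \in Sc l).
all: by rewrite /= !xpair_eqE ?andbF ?andbT // [i == _]eq_sym.
Qed.

Hypothesis A_def : A = \sum_(l < s0) \sum_(j in Sc l) Acoef l *: delta_mx (c j l) j.

Lemma dict_entry i j : A i j = \sum_(l < s0 | in_dict i j l) Acoef l.
Proof.
rewrite A_def summxE [RHS]big_mkcond; apply: eq_bigr => l _; rewrite summxE /in_dict.
case: (boolP (j \in Sc l)) => [jS | jS] /=.
  rewrite (bigD1 j) //= big1 => [|k /andP [_ kj]].
    rewrite !mxE eqxx andbT addr0 [c j l == i]eq_sym.
    by case: (i == c j l); rewrite ?mulr1 ?mulr0.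
  by rewrite !mxE [j == k]eq_sym (negbTE kj) andbF mulr0.
rewrite big1 // => k kS; have kj : (j == k) = false by apply: contraNF jS => /eqP ->.
by rewrite !mxE kj andbF mulr0.
Qed.

Hypothesis c_unique : forall (j j' : 'I_(2 ^ n)) (l l' : nat), (l < s0)%N -> (l' < s0)%N ->
  j \in Sc l -> j' \in Sc l' -> (c j l, j) = (c j' l', j') -> l = l' /\ j = j'.

Lemma in_dict_unique i j (l l' : 'I_s0) : in_dict i j l -> in_dict i j l' -> l = l'.
Proof.
move=> /andP [jS /eqP cl] /andP [jS' /eqP cl']; apply: val_inj.
by case: (c_unique (ltn_ord l) (ltn_ord l') jS jS'); rewrite ?cl ?cl'.
Qed.

Hypothesis Oc_action : forall i j : 'I_(2 ^ n), (i < 2 ^ m)%N ->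
  Oc *m ket C ((i, q0, j) : Sp3 n) =
    if (i < s0)%N && (j \in Sc i) then ket C ((c j i, q0, j) : Sp3 n)
    else ket C ((i, q1, j) : Sp3 n).

Hypothesis PREP_zero : PREP *m delta_mx (zero_ord m) (0 : 'I_1) =
  (sqrtC subnorm)^-1 *: \sum_(l < s0) sqrtC (Acoef l) *: delta_mx (lowidx m l) (0 : 'I_1).

Lemma lt_pow2_up_log (l : 'I_s0) : (l < 2 ^ m)%N.
Proof. exact: leq_trans (ltn_ord l) (up_logP s0 (ltnSn 1)). Qed.

Lemma prep_zero j :
  prep_ext n PREP *m ket C ((zero_ord n, q0, q0, j) : Sp n) =
    \sum_(l < s0) ((sqrtC subnorm)^-1 * sqrtC (Acoef l)) *:
      ket C ((widen_ord s0_le l, q0, q0, j) : Sp n).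
Proof.
apply: prep_ext_ket.
  have -> : lowidx m (zero_ord n) = zero_ord m by apply: val_inj; rewrite /= mod0n.
  by rewrite PREP_zero scaler_sumr; apply: eq_bigr => l _; rewrite scalerA.
move=> l; congr (_, _, _, _); apply: val_inj.
by rewrite /= div0n divn_small ?lt_pow2_up_log.
Qed.

Lemma encode_zero j :
  ext_del0 Oc *m prep_ext n PREP *m ket C ((zero_ord n, q0, q0, j) : Sp n) =
    \sum_(l < s0) ((sqrtC subnorm)^-1 * sqrtC (Acoef l)) *: ket C (dict_state l j).
Proof.
rewrite -mulmxA prep_zero mulmx_sumr; apply: eq_bigr => l _; rewrite -scalemxAr.
have := @Oc_action (widen_ord s0_le l) j (lt_pow2_up_log l).
by rewrite /= ltn_ord /dict_state /=; case: (j \in Sc l) => Ol; rewrite (ext_del0_ket _ Ol).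
Qed.

Hypothesis Acoef_pos : forall l, (l < s0)%N -> 0 < Acoef l.
Hypothesis A_sym : A^T = A.

Lemma encoded_block i j :
  let W := ext_del0 Oc *m prep_ext n PREP in
  (adj (iso0 C n) *m (adj W *m swap_mx C n *m W) *m iso0 C n) i j = subnorm^-1 * A i j.
Proof.
move=> W; set r := (sqrtC subnorm)^-1.
have amplitude_real (l : 'I_s0) : (r * sqrtC (Acoef l))^* = r * sqrtC (Acoef l).
  apply: geC0_conj; rewrite mulr_ge0 ?invr_ge0 ?sqrtC_ge0 ?sumr_ge0 // => [k _|];
  exact/ltW/Acoef_pos.
have amplitude i' j' :
    \sum_(l < s0 | in_dict i' j' l) r * sqrtC (Acoef l) = r * sqrtC (A i' j').
  by rewrite -mulr_sumr dict_entry sqrtC_sum_unique // => l l'; exact: in_dict_unique.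
have A_ji : A j i = A i j by rewrite -[in LHS]A_sym mxE.
rewrite adj_conj_entry !col_iso0.
have -> : forall x y : Sp n, adj (ket C x) *m (adj W *m swap_mx C n *m W) *m ket C y =
    adj (W *m ket C x) *m (swap_mx C n *m (W *m ket C y)).
  by move=> x y; rewrite [adj (W *m _)]adjM !mulmxA.
rewrite !encode_zero swap_mx_sum_ket dot_ket_sum.
under eq_bigr do under eq_bigr do rewrite amplitude_real swap_dict_state.
by rewrite sum_mul_cond !amplitude A_ji mulrACA -!expr2 exprVn !sqrtCK.
Qed.

End DictionaryBlockEncoding.

Theorem theorem2 (C : numClosedFieldType) (n s0 : nat)
  (A : 'M[C]_(2 ^ n)) (Acoef : nat -> C) (Sc : nat -> {set 'I_(2 ^ n)})
  (c : 'I_(2 ^ n) -> nat -> 'I_(2 ^ n))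
  (Oc : 'M[C]_#|{: Sp3 n}|) (PREP : 'M[C]_(2 ^ up_log 2 s0)) :
  (1 <= n)%N ->
  (s0 <= 2 ^ n)%N ->
  (forall l, (l < s0)%N -> 0 < Acoef l) ->
  A^T = A ->
  (forall i j, 0 <= A i j) ->
  (forall (j : 'I_(2 ^ n)) (l l' : nat), (l < s0)%N -> (l' < s0)%N ->
      j \in Sc l -> j \in Sc l' -> c j l = c j l' -> l = l') ->
  (forall (j j' : 'I_(2 ^ n)) (l l' : nat), (l < s0)%N -> (l' < s0)%N ->
      j \in Sc l -> j' \in Sc l' -> (c j l, j) = (c j' l', j') ->
      l = l' /\ j = j') ->
  A = \sum_(l < s0) \sum_(j in Sc l) Acoef l *: delta_mx (c j l) j ->
  unitary Oc ->
  (forall i j : 'I_(2 ^ n), (i < 2 ^ up_log 2 s0)%N ->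
     Oc *m ket C ((i, q0, j) : Sp3 n) =
       if (i < s0)%N && (j \in Sc i) then ket C ((c j i, q0, j) : Sp3 n)
       else ket C ((i, q1, j) : Sp3 n)) ->
  unitary PREP ->
  PREP *m delta_mx (zero_ord (up_log 2 s0)) (0 : 'I_1) =
    (sqrtC (\sum_(l < s0) Acoef l))^-1 *:
      \sum_(l < s0) sqrtC (Acoef l) *: delta_mx (lowidx (up_log 2 s0) l) (0 : 'I_1) ->
  let W := ext_del0 Oc *m prep_ext n PREP in
  let UA := adj W *m swap_mx C n *m W in
  unitary UA /\ adj UA = UA /\
  adj (iso0 C n) *m UA *m iso0 C n = (\sum_(l < s0) Acoef l)^-1 *: A.
Proof.
move=> _ s0_le Acoef_pos A_sym _ _ c_unique A_def Oc_unitary Oc_action PREP_unitary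
  PREP_zero W UA.
have W_unitary : unitary W.
  exact: unitary_mul (unitary_ext_del0 Oc_unitary)
    (unitary_prep_ext (up_log_min (ltnSn 1) s0_le) PREP_unitary).
split.
  exact: unitary_mul (unitary_mul (unitary_adj W_unitary) (unitary_swap_mx C n)) W_unitary.
split; first by rewrite /UA adj_conj_hermitian // adj_swap_mx.
apply/matrixP => i j.
by rewrite (encoded_block s0_le A_def c_unique Oc_action PREP_zero Acoef_pos A_sym) mxE.
Qed.
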